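(* Let $(\Gamma,d)$ be as in the context, with shells $S_m$ and shadows $O(g)$. There exist $R,\Delta\ge0$ depending only on $(\Gamma,d)$ such that for all $n$ and all $r>n+\Delta$, for every $g\in S_r$, every $\xi\in O(g)$ and every $h\in S_n$, \[|\beta_\xi(h,e)-\beta_g(h,e)|\le R.\]
   Context: $\Gamma$ is a finitely generated group acting properly cocompactly by isometries on a proper quasiruled hyperbolic space $(X,d)$ with basepoint $x_0$, and $d(g,h)=d(g.x_0,h.x_0)$ makes $(\Gamma,d)$ a proper quasiruled hyperbolic space (points joined by $(\lambda,c)$-quasigeodesics which are $\tau$-quasirulers, i.e. $(z(s)|z(u))_{z(t)}\le\tau$ for $s<t<u$ with Gromov product $(x|y)_w=\frac12(d(x,w)+d(y,w)-d(x,y))$; quasitriangles uniformly thin). $\partial\Gamma$ is the visual boundary. For $z\in\Gamma$, $\beta_z(x,y)=d(z,x)-d(z,y)$; for $\xi\in\partial\Gamma$, $\beta_\xi(x,y)=\sup\limsup_{t\to\infty}(d(z(t),x)-d(z(t),y))$ over quasiruler rays $z$ from $y$ to $\xi$. $B_m=\{g:d(g,e)\le m\}$, $S_m=B_m\setminus B_{m-k}$ for a fixed $k$, and $O(g)=O_C(e,g)$ is the set of $\xi\in\partial\Gamma$ such that some quasiruler ray from $e$ to $\xi$ meets the closed $C$-ball about $g$, for a fixed constant $C\ge0$. *)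

From Stdlib Require Import Reals Lra List.
From Coquelicot Require Import Coquelicot.
Open Scope R_scope.

Section Geometry.
Variable T : Type.
Variable d : T -> T -> R.

Definition gprod (x y w : T) : R := (d x w + d y w - d x y) / 2.

Definition is_metric : Prop :=
  (forall x y, 0 <= d x y) /\ (forall x, d x x = 0) /\
  (forall x y, d x y = 0 -> x = y) /\
  (forall x y, d x y = d y x) /\ (forall x y z, d x z <= d x y + d y z).

Definition is_proper_space : Prop :=
  forall (x0 : T) (r : R) (u : nat -> T), (forall n, d (u n) x0 <= r) ->
    exists (phi : nat -> nat) (l : T),
      (forall n, (phi n < phi (S n))%nat) /\ d l x0 <= r /\
      is_lim_seq (fun n => d (u (phi n)) l) 0.

Definition quasigeodesic_on (lam c : R) (D : R -> Prop) (z : R -> T) : Prop :=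
  forall s t, D s -> D t ->
    Rabs (s - t) / lam - c <= d (z s) (z t) <= lam * Rabs (s - t) + c.

Definition quasiruler_on (tau : R) (D : R -> Prop) (z : R -> T) : Prop :=
  forall s t u, D s -> D t -> D u -> s < t -> t < u ->
    gprod (z s) (z u) (z t) <= tau.

Definition seg (L : R) : R -> Prop := fun t => 0 <= t <= L.
Definition halfline : R -> Prop := fun t => 0 <= t.

Definition qg_path (lam c : R) (x y : T) (L : R) (z : R -> T) : Prop :=
  0 <= L /\ z 0 = x /\ z L = y /\ quasigeodesic_on lam c (seg L) z.

Definition qr_path (lam c tau : R) (x y : T) (L : R) (z : R -> T) : Prop :=
  qg_path lam c x y L z /\ quasiruler_on tau (seg L) z.

Definition thin_quasitriangles (lam c delta : R) : Prop :=
  forall x y w L1 L2 L3 z1 z2 z3,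
    qg_path lam c x y L1 z1 -> qg_path lam c y w L2 z2 ->
    qg_path lam c w x L3 z3 ->
    forall s, 0 <= s <= L1 ->
      (exists t, 0 <= t <= L2 /\ d (z1 s) (z2 t) <= delta) \/
      (exists t, 0 <= t <= L3 /\ d (z1 s) (z3 t) <= delta).

Definition quasiruled_hyperbolic (lam c tau delta : R) : Prop :=
  1 <= lam /\ 0 <= c /\ 0 <= tau /\ 0 <= delta /\
  (forall x y, exists L z, qr_path lam c tau x y L z) /\
  thin_quasitriangles lam c delta.

Definition qr_ray (lam c tau : R) (z : R -> T) : Prop :=
  quasigeodesic_on lam c halfline z /\ quasiruler_on tau halfline z.

Definition rays_asymptotic (z w : R -> T) : Prop :=
  exists D, (forall s, 0 <= s -> exists t, 0 <= t /\ d (z s) (w t) <= D) /\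
            (forall t, 0 <= t -> exists s, 0 <= s /\ d (z s) (w t) <= D).

(** Visual boundary: a boundary point is an asymptoticity class of
    quasiruler rays (represented as a predicate on rays). *)
Definition boundary_point (lam c tau : R) (xi : (R -> T) -> Prop) : Prop :=
  (exists z, xi z) /\
  (forall z, xi z -> qr_ray lam c tau z) /\
  (forall z w, xi z -> qr_ray lam c tau w -> (xi w <-> rays_asymptotic z w)).

Definition ray_to (lam c tau : R) (y : T) (xi : (R -> T) -> Prop) (z : R -> T)
  : Prop := qr_ray lam c tau z /\ z 0 = y /\ xi z.

Definition limsup_infty (f : R -> R) : Rbar :=
  Glb_Rbar (fun M => exists T0 : R,
    Finite M = Lub_Rbar (fun v => exists t, T0 <= t /\ v = f t)).

Definition beta_pt (z x y : T) : R := d z x - d z y.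

Definition beta_bd (lam c tau : R) (xi : (R -> T) -> Prop) (x y : T) : Rbar :=
  Lub_Rbar (fun v => exists z, ray_to lam c tau y xi z /\
      Finite v = limsup_infty (fun t => d (z t) x - d (z t) y)).

Definition shell (e : T) (k m : R) (g : T) : Prop :=
  d g e <= m /\ ~ (d g e <= m - k).

Definition shadow (lam c tau : R) (C : R) (e g : T) (xi : (R -> T) -> Prop)
  : Prop :=
  exists z, ray_to lam c tau e xi z /\ exists t, 0 <= t /\ d (z t) g <= C.

End Geometry.

Definition is_group {G : Type} (mul : G -> G -> G) (inv : G -> G) (e : G)
  : Prop :=
  (forall a b c, mul a (mul b c) = mul (mul a b) c) /\
  (forall a, mul e a = a /\ mul a e = a) /\
  (forall a, mul (inv a) a = e /\ mul a (inv a) = e).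

Inductive generated_by {G : Type} (mul : G -> G -> G) (inv : G -> G) (e : G)
  (S : list G) : G -> Prop :=
| gen_e : generated_by mul inv e S e
| gen_r : forall g s, generated_by mul inv e S g -> In s S ->
            generated_by mul inv e S (mul g s)
| gen_rinv : forall g s, generated_by mul inv e S g -> In s S ->
            generated_by mul inv e S (mul g (inv s)).

Definition finitely_generated {G : Type} (mul : G -> G -> G) (inv : G -> G)
  (e : G) : Prop :=
  exists S : list G, forall g, generated_by mul inv e S g.

Definition isometric_action {G X : Type} (mul : G -> G -> G) (e : G)
  (dX : X -> X -> R) (act : G -> X -> X) : Prop :=
  (forall x, act e x = x) /\
  (forall g h x, act (mul g h) x = act g (act h x)) /\
  (forall g x y, dX (act g x) (act g y) = dX x y).

Definition proper_action {G X : Type} (dX : X -> X -> R) (act : G -> X -> X)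
  : Prop :=
  forall x r, exists l : list G, forall g, dX (act g x) x <= r -> In g l.

Definition cocompact_action {G X : Type} (dX : X -> X -> R) (act : G -> X -> X)
  : Prop :=
  exists D, forall x y : X, exists g, dX x (act g y) <= D.

From Stdlib Require Import Reals Lra.
From Coquelicot Require Import Coquelicot.
Open Scope R_scope.

(* Follow a quasiruler ray z from e to xi which passes within C of g, say at
   p = z t0.  As p is much farther from e than h, thinness of the triangle
   (e, z t, h) forces p to be delta-close to a quasiruler from z t to h, so
   beta_{z t}(h,e) >= beta_p(h,e) - 2 delta - 2 tau for all t >= t0.
   Conversely any ray w from e to xi is asymptotic to z, so thinness of the
   triangle (e, z T, w S) for T large puts p delta-close to some w s, and the
   quasiruler property of w gives beta_{w t}(h,e) <= beta_p(h,e) + 2 delta +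
   2 tau for t >= s.  Finally |beta_p(h,e) - beta_g(h,e)| <= 2 C. *)

Lemma limsup_infty_le (f : R -> R) (T1 A : R) :
  (forall t, T1 <= t -> f t <= A) -> Rbar_le (limsup_infty f) A.
Proof.
  intros Hf. unfold limsup_infty.
  set (E := fun v => exists t, T1 <= t /\ v = f t).
  destruct (Lub_Rbar_correct E) as [Hub Hlub].
  assert (HE_le : Rbar_le (Lub_Rbar E) A).
  { apply Hlub. intros v [t [Ht ->]]. apply Hf, Ht. }
  assert (HE_ge : Rbar_le (f T1) (Lub_Rbar E)).
  { apply Hub. exists T1. split; [lra | reflexivity]. }
  destruct (Lub_Rbar E) as [l | |] eqn:Hl; simpl in HE_le, HE_ge; try contradiction.
  destruct (Glb_Rbar_correct (fun M => exists T0 : R,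
    Finite M = Lub_Rbar (fun v => exists t, T0 <= t /\ v = f t))) as [Hlb _].
  apply Rbar_le_trans with l; [| exact HE_le].
  apply Hlb. exists T1. exact (eq_sym Hl).
Qed.

Lemma limsup_infty_ge (f : R -> R) (T1 B : R) :
  (forall t, T1 <= t -> B <= f t) -> Rbar_le B (limsup_infty f).
Proof.
  intros Hf. unfold limsup_infty.
  destruct (Glb_Rbar_correct (fun M => exists T0 : R,
    Finite M = Lub_Rbar (fun v => exists t, T0 <= t /\ v = f t))) as [_ Hglb].
  apply Hglb. intros M [T0 HM].
  destruct (Lub_Rbar_correct (fun v => exists t, T0 <= t /\ v = f t)) as [Hub _].
  assert (Hfar : Rbar_le (f (Rmax T0 T1)) M).
  { rewrite HM. apply Hub. exists (Rmax T0 T1). split; [apply Rmax_l | reflexivity]. }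
  pose proof (Hf (Rmax T0 T1) (Rmax_r _ _)).
  simpl in Hfar |- *. lra.
Qed.

Lemma Rbar_abs_minus_le (x : Rbar) (b eps : R) :
  Rbar_le (b - eps) x -> Rbar_le x (b + eps) ->
  Rbar_le (Rbar_abs (Rbar_minus x b)) eps.
Proof.
  intros Hlo Hhi.
  destruct x as [x | |]; simpl in Hlo, Hhi |- *; try contradiction.
  apply Rabs_le. lra.
Qed.

Section Busemann.
Variables (T : Type) (d : T -> T -> R).

Lemma beta_bd_le lam c tau (xi : (R -> T) -> Prop) (x y : T) (A : R) :
  (forall z, ray_to T d lam c tau y xi z ->
     exists T1, forall t, T1 <= t -> beta_pt T d (z t) x y <= A) ->
  Rbar_le (beta_bd T d lam c tau xi x y) A.
Proof.
  intros Hev. unfold beta_bd.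
  destruct (Lub_Rbar_correct (fun v => exists z, ray_to T d lam c tau y xi z /\
    Finite v = limsup_infty (fun t => d (z t) x - d (z t) y))) as [_ Hlub].
  apply Hlub. intros v [z [Hz Hv]].
  destruct (Hev z Hz) as [T1 HT1].
  rewrite Hv. exact (limsup_infty_le _ T1 A HT1).
Qed.

Lemma beta_bd_ge lam c tau (xi : (R -> T) -> Prop) (x y : T) (z : R -> T)
    (T1 B A : R) :
  ray_to T d lam c tau y xi z ->
  (forall t, T1 <= t -> B <= beta_pt T d (z t) x y <= A) ->
  Rbar_le B (beta_bd T d lam c tau xi x y).
Proof.
  intros Hz Hbd.
  (* the upper bound A is needed: a ray with infinite limsup does not enter beta_bd *)
  pose proof (limsup_infty_ge _ T1 B (fun t Ht => proj1 (Hbd t Ht))) as Hge.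
  pose proof (limsup_infty_le _ T1 A (fun t Ht => proj2 (Hbd t Ht))) as Hle.
  destruct (limsup_infty (fun t => beta_pt T d (z t) x y)) as [v | |] eqn:Hv;
    simpl in Hge, Hle; try contradiction.
  unfold beta_bd.
  destruct (Lub_Rbar_correct (fun v => exists z, ray_to T d lam c tau y xi z /\
    Finite v = limsup_infty (fun t => d (z t) x - d (z t) y))) as [Hub _].
  apply Rbar_le_trans with v; [exact Hge |].
  apply Hub. exists z. split; [exact Hz | exact (eq_sym Hv)].
Qed.

Hypothesis d_nonneg : forall x y, 0 <= d x y.
Hypothesis d_refl : forall x, d x x = 0.
Hypothesis d_sym : forall x y, d x y = d y x.
Hypothesis d_triangle : forall x y z, d x z <= d x y + d y z.

Lemma beta_pt_swap (z x y : T) : beta_pt T d z x y = - beta_pt T d z y x.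
Proof. unfold beta_pt. ring. Qed.

Lemma beta_pt_move (p g x y : T) :
  beta_pt T d g x y - 2 * d p g <= beta_pt T d p x y <= beta_pt T d g x y + 2 * d p g.
Proof.
  unfold beta_pt.
  pose proof (d_triangle p g x). pose proof (d_triangle g p x).
  pose proof (d_triangle p g y). pose proof (d_triangle g p y).
  rewrite (d_sym g p) in *. lra.
Qed.

Lemma beta_pt_ge_near_between (x y w p q : T) (tau delta : R) :
  d x q + d q y <= d x y + 2 * tau -> d p q <= delta ->
  beta_pt T d p y w - 2 * delta - 2 * tau <= beta_pt T d x y w.
Proof.
  intros Hq Hpq. unfold beta_pt.
  pose proof (d_triangle x q p). pose proof (d_triangle p q y).
  pose proof (d_triangle x p w). rewrite (d_sym q p) in *. lra.
Qed.

Lemma quasiruler_detour tau (D : R -> Prop) (z : R -> T) (a s b : R) :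
  0 <= tau -> quasiruler_on T d tau D z -> D a -> D s -> D b -> a <= s <= b ->
  d (z a) (z s) + d (z s) (z b) <= d (z a) (z b) + 2 * tau.
Proof.
  intros Htau Hr Ha Hs Hb Hasb.
  destruct (Req_dec s a) as [-> | Hsa]; [rewrite d_refl; lra |].
  destruct (Req_dec s b) as [-> | Hsb]; [rewrite d_refl; lra |].
  pose proof (Hr a s b Ha Hs Hb ltac:(lra) ltac:(lra)) as Hg.
  unfold gprod in Hg. rewrite (d_sym (z s) (z b)). lra.
Qed.

Lemma qr_path_detour lam c tau (x y : T) L z :
  0 <= tau -> qr_path T d lam c tau x y L z ->
  forall t, 0 <= t <= L -> d x (z t) + d (z t) y <= d x y + 2 * tau.
Proof.
  intros Htau [[HL [Hz0 [HzL _]]] Hr] t Ht.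
  rewrite <- Hz0, <- HzL.
  apply (quasiruler_detour tau (seg L)); unfold seg; try assumption; lra.
Qed.

Lemma qr_ray_restrict lam c tau z L :
  qr_ray T d lam c tau z -> 0 <= L -> qg_path T d lam c (z 0) (z L) L z.
Proof.
  intros [Hq _] HL. split; [exact HL | split; [reflexivity | split; [reflexivity |]]].
  intros s t Hs Ht. apply Hq; unfold seg, halfline in *; lra.
Qed.

Lemma qr_ray_restrict_rev lam c tau z S :
  qr_ray T d lam c tau z -> 0 <= S ->
  qg_path T d lam c (z S) (z 0) S (fun t => z (S - t)).
Proof.
  intros [Hq _] HS. split; [exact HS | split; [| split]].
  - rewrite Rminus_0_r. reflexivity.
  - rewrite Rminus_diag. reflexivity.
  - intros s t Hs Ht. unfold seg in *.
    replace (Rabs (s - t)) with (Rabs ((S - s) - (S - t))).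
    + apply Hq; unfold halfline; lra.
    + rewrite Rabs_minus_sym. f_equal. ring.
Qed.

Section Quasiruled.
Variables (lam c tau delta : R).
Hypothesis hyperbolic : quasiruled_hyperbolic T d lam c tau delta.

Lemma qr_ray_beta_pt_ge (e h : T) (z : R -> T) (t0 : R) :
  qr_ray T d lam c tau z -> z 0 = e -> 0 <= t0 ->
  d h e + delta + 2 * tau < d (z t0) e ->
  forall t, t0 <= t ->
    beta_pt T d (z t0) h e - 2 * delta - 2 * tau <= beta_pt T d (z t) h e.
Proof.
  intros Hz Hz0 Ht0 Hfar t Ht.
  destruct hyperbolic as (_ & _ & Htau & _ & Hpaths & Hthin).
  destruct (Hpaths (z t) h) as (L2 & z2 & Hz2).
  destruct (Hpaths h e) as (L3 & z3 & Hz3).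
  assert (Hside := qr_ray_restrict lam c tau z t Hz ltac:(lra)).
  rewrite Hz0 in Hside.
  destruct (Hthin e (z t) h t L2 L3 z z2 z3 Hside (proj1 Hz2) (proj1 Hz3) t0
    ltac:(lra)) as [[s [Hs Hd]] | [s [Hs Hd]]].
  - apply (beta_pt_ge_near_between _ _ _ _ (z2 s)); [| exact Hd].
    exact (qr_path_detour _ _ _ _ _ _ _ Htau Hz2 s Hs).
  - (* z t0 would be delta-close to a quasiruler from h to e, hence not far from e *)
    exfalso.
    pose proof (qr_path_detour _ _ _ _ _ _ _ Htau Hz3 s Hs).
    pose proof (d_nonneg h (z3 s)). pose proof (d_triangle (z t0) (z3 s) e).
    lra.
Qed.

Lemma asymptotic_qr_rays_close (z w : R -> T) (t0 : R) :
  qr_ray T d lam c tau z -> qr_ray T d lam c tau w -> z 0 = w 0 ->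
  rays_asymptotic T d z w -> 0 <= t0 ->
  exists s, 0 <= s /\ d (z t0) (w s) <= delta.
Proof.
  intros Hz Hw Hzw [D [HD _]] Ht0.
  destruct hyperbolic as (Hlam & Hc & Htau & Hdelta & Hpaths & Hthin).
  assert (HD0 : 0 <= D).
  { destruct (HD 0 ltac:(lra)) as (t & _ & Ht). pose proof (d_nonneg (z 0) (w t)). lra. }
  (* beyond z T1 the ray z is farther than delta + D + 2 tau from z t0 *)
  set (K := delta + D + 2 * tau + c + 1).
  set (T1 := t0 + lam * K).
  assert (HlK : 0 <= lam * K) by (apply Rmult_le_pos; unfold K; lra).
  destruct (HD T1 ltac:(unfold T1; lra)) as (S & HS & HdS).
  destruct (Hpaths (z T1) (w S)) as (L2 & z2 & Hz2).
  assert (Hside1 := qr_ray_restrict lam c tau z T1 Hz ltac:(unfold T1; lra)).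
  assert (Hside3 := qr_ray_restrict_rev lam c tau w S Hw HS).
  rewrite <- Hzw in Hside3.
  destruct (Hthin (z 0) (z T1) (w S) T1 L2 S z z2 _ Hside1 (proj1 Hz2) Hside3 t0
    ltac:(unfold T1; lra)) as [[t [Ht Hd]] | [t [Ht Hd]]].
  - exfalso.
    pose proof (qr_path_detour _ _ _ _ _ _ _ Htau Hz2 t Ht).
    pose proof (d_nonneg (z2 t) (w S)).
    pose proof (d_triangle (z t0) (z2 t) (z T1)). pose proof (d_sym (z2 t) (z T1)).
    destruct Hz as [Hq _].
    pose proof (Hq t0 T1 ltac:(unfold halfline; lra)
      ltac:(unfold halfline, T1; lra)) as Hqg.
    rewrite Rabs_minus_sym, Rabs_right in Hqg by (unfold T1; lra).
    replace ((T1 - t0) / lam) with K in Hqg by (unfold T1; field; lra).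
    unfold K in Hqg. lra.
  - exists (S - t). split; [lra | exact Hd].
Qed.

Lemma asymptotic_qr_ray_beta_pt_le (e h : T) (z w : R -> T) (t0 : R) :
  qr_ray T d lam c tau z -> qr_ray T d lam c tau w -> z 0 = e -> w 0 = e ->
  rays_asymptotic T d z w -> 0 <= t0 ->
  exists s0, forall t, s0 <= t ->
    beta_pt T d (w t) h e <= beta_pt T d (z t0) h e + 2 * delta + 2 * tau.
Proof.
  intros Hz Hw Hz0 Hw0 Hzw Ht0.
  destruct (asymptotic_qr_rays_close z w t0 Hz Hw ltac:(congruence) Hzw Ht0)
    as (s & Hs & Hd).
  exists s. intros t Ht.
  destruct hyperbolic as (_ & _ & Htau & _).
  assert (Hbetween : d (w t) (w s) + d (w s) e <= d (w t) e + 2 * tau).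
  { pose proof (quasiruler_detour tau halfline w 0 s t Htau (proj2 Hw)) as Hdetour.
    unfold halfline in Hdetour. rewrite Hw0 in Hdetour.
    rewrite (d_sym (w t) (w s)), (d_sym (w s) e), (d_sym (w t) e).
    lra. }
  pose proof (beta_pt_ge_near_between (w t) e h (z t0) (w s) tau delta Hbetween Hd).
  rewrite (beta_pt_swap (w t)), (beta_pt_swap (z t0)). lra.
Qed.

Theorem beta_bd_shadow_estimate (e g h : T) (xi : (R -> T) -> Prop) (k C n r : R) :
  r > n + (k + C + 2 * tau + delta) ->
  shell T d e k r g -> shell T d e k n h ->
  boundary_point T d lam c tau xi -> shadow T d lam c tau C e g xi ->
  Rbar_le (Rbar_abs (Rbar_minus (beta_bd T d lam c tau xi h e) (beta_pt T d g h e)))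
    (2 * delta + 2 * tau + 2 * C).
Proof.
  intros Hnr [_ Hg] [Hh _] (_ & _ & Hclass) (z & Hz & t0 & Ht0 & Hzg).
  apply Rnot_le_lt in Hg.
  destruct Hz as (Hzr & Hz0 & Hxiz).
  pose proof (beta_pt_move (z t0) g h e) as Hmove.
  assert (Hfar : d h e + delta + 2 * tau < d (z t0) e).
  { pose proof (d_triangle g (z t0) e). rewrite (d_sym g (z t0)) in *. lra. }
  assert (Hupper : forall w, ray_to T d lam c tau e xi w -> exists s0, forall t, s0 <= t ->
            beta_pt T d (w t) h e <= beta_pt T d g h e + (2 * delta + 2 * tau + 2 * C)).
  { intros w (Hwr & Hw0 & Hxiw).
    destruct (asymptotic_qr_ray_beta_pt_le e h z w t0 Hzr Hwr Hz0 Hw0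
      (proj1 (Hclass z w Hxiz Hwr) Hxiw) Ht0) as [s0 Hs0].
    exists s0. intros t Ht. specialize (Hs0 t Ht). lra. }
  apply Rbar_abs_minus_le.
  - destruct (Hupper z (conj Hzr (conj Hz0 Hxiz))) as [s0 Hs0].
    apply (beta_bd_ge _ _ _ _ _ _ z (Rmax t0 s0) _
      (beta_pt T d g h e + (2 * delta + 2 * tau + 2 * C)) (conj Hzr (conj Hz0 Hxiz))).
    intros t Ht. split.
    + pose proof (qr_ray_beta_pt_ge e h z t0 Hzr Hz0 Ht0 Hfar t
        (Rle_trans _ _ _ (Rmax_l t0 s0) Ht)). lra.
    + apply Hs0. exact (Rle_trans _ _ _ (Rmax_r t0 s0) Ht).
  - apply beta_bd_le. exact Hupper.
Qed.

End Quasiruled.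
End Busemann.

Theorem mainTheorem9
  (G : Type) (mul : G -> G -> G) (inv : G -> G) (e : G)
  (X : Type) (dX : X -> X -> R) (act : G -> X -> X) (x0 : X)
  (lam c tau delta k C : R) :
  is_group mul inv e ->
  finitely_generated mul inv e ->
  is_metric X dX ->
  is_proper_space X dX ->
  (exists lamX cX tauX deltaX,
      quasiruled_hyperbolic X dX lamX cX tauX deltaX) ->
  isometric_action mul e dX act ->
  proper_action dX act ->
  cocompact_action dX act ->
  (* (G,d) with d(g,h) = dX(g.x0, h.x0) is quasiruled hyperbolic with the
     fixed constants lam, c, tau (used for quasiruler rays / the boundary) *)
  quasiruled_hyperbolic G (fun g h => dX (act g x0) (act h x0))
    lam c tau delta ->
  0 < k -> 0 <= C ->
  exists R0 Delta : R, 0 <= R0 /\ 0 <= Delta /\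
    forall (n r : nat), INR r > INR n + Delta ->
    forall (g : G) (xi : (R -> G) -> Prop) (h : G),
      let d := fun a b => dX (act a x0) (act b x0) in
      shell G d e k (INR r) g ->
      boundary_point G d lam c tau xi ->
      shadow G d lam c tau C e g xi ->
      shell G d e k (INR n) h ->
      Rbar_le (Rbar_abs (Rbar_minus (beta_bd G d lam c tau xi h e)
                                    (Finite (beta_pt G d g h e))))
              (Finite R0).
Proof.
  intros _ _ (Hnonneg & Hrefl & _ & Hsym & Htri) _ _ _ _ _ Hhyp Hk HC.
  exists (2 * delta + 2 * tau + 2 * C), (k + C + 2 * tau + delta).
  pose proof Hhyp as (_ & _ & Htau & Hdelta & _).
  split; [lra | split; [lra |]].
  intros n r Hnr g xi h d Hg Hxi Hsh Hh.
  exact (beta_bd_shadow_estimate G d (fun x y => Hnonneg _ _) (fun x => Hrefl _)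
    (fun x y => Hsym _ _) (fun x y z => Htri _ _ _) lam c tau delta Hhyp
    e g h xi k C (INR n) (INR r) Hnr Hg Hh Hxi Hsh).
Qed.
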